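(* For $\varsigma\in[\tfrac14,\tfrac12]$ and $\nu\in(0,1)$ let $$\hat M(\varsigma,\nu):=\begin{pmatrix}-\frac23\varsigma\log^3\nu+\frac12 & -\nu & \frac12\nu^2\\ -\nu & -\frac23(1-2\varsigma)\log^3\nu+2(1+\log\nu) & -\nu\\ \frac12\nu^2 & -\nu & -\frac23\varsigma\log^3\nu+\frac12\end{pmatrix}.$$ Two of the three eigenvalues of $\hat M(\varsigma,\nu)$ are nonnegative for all $\nu\in(0,1)$ and $\varsigma\in[\tfrac14,\tfrac12]$. The third eigenvalue is $E_3(\varsigma,\nu):=\frac1{12}\big(e_1(\varsigma,\nu)-\sqrt{e_2(\varsigma,\nu)}\big)$, where $$e_1=15+3\nu^2+(12-4\log^2\nu+4\varsigma\log^2\nu)\log\nu,$$ $$\begin{aligned}e_2=\;&81+234\nu^2+9\nu^4+216\log\nu-72\nu^2\log\nu+144\log^2\nu-72\log^3\nu+24\nu^2\log^3\nu-96\log^4\nu+16\log^6\nu\\&+(216\log^3\nu-72\nu^2\log^3\nu+288\log^4\nu-96\log^6\nu)\varsigma+144\log^6\nu\,\varsigma^2,\end{aligned}$$ and $E_3(\varsigma,\nu)\ge0$ if and only if $\varsigma\le\varsigma_2(\nu)$, where $$\varsigma_2(\nu):=\frac{1}{16\log^6\nu}\big(f(\nu)+\sqrt{g(\nu)}\big),\quad f(\nu):=\big(6(-1+\nu^2)+4(-3+\log^2\nu)\log\nu\big)\log^3\nu,$$ $$g(\nu):=96\log^6\nu\big(3(1-\nu^2)+3(1+\nu^2)\l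og\nu-(1+\nu^2)\log^3\nu\big)+\big(6(-1+\nu^2)\log^3\nu+4(\log^2\nu-3)\log^4\nu\big)^2.$$
   Context: This is the case $c_u=c_v$ for the monolayer: with $c_0,c_u,c_v\ge0$ not all zero, $\varsigma=\frac{c_v+c_0}{2(c_0+c_u+c_v)}$ and $\nu=e^{-2\pi\delta_m/L}$, $\delta_m=(\tfrac32(c_0+c_u+c_v))^{1/3}$; the assumption $c_u=c_v$ forces $\varsigma\in[\tfrac14,\tfrac12]$. The matrix $\hat M$ represents (up to the factor $L/\pi$) the first Fourier mode of the second variation of the energy at the monolayer. *)

From HB Require Import structures.
From mathcomp Require Import all_boot all_order all_algebra.
From mathcomp Require Import all_classical all_reals.
From mathcomp Require Import exp.
Set Implicit Arguments. Unset Strict Implicit. Unset Printing Implicit Defensive.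
Import Order.TTheory GRing.Theory Num.Theory.
Local Open Scope ring_scope.

Section Defs.
Variable R : realType.

Definition Mhat (s nu : R) : 'M[R]_3 :=
  let L := ln nu in
  let rows : seq (seq R) :=
    [:: [:: -(2/3) * s * L ^+ 3 + 1/2; - nu; (1/2) * nu ^+ 2];
        [:: - nu; -(2/3) * (1 - 2 * s) * L ^+ 3 + 2 * (1 + L); - nu];
        [:: (1/2) * nu ^+ 2; - nu; -(2/3) * s * L ^+ 3 + 1/2]] in
  \matrix_(i < 3, j < 3) nth 0 (nth [::] rows i) j.

Definition e1 (s nu : R) : R :=
  let L := ln nu in
  15 + 3 * nu ^+ 2 + (12 - 4 * L ^+ 2 + 4 * s * L ^+ 2) * L.

Definition e2 (s nu : R) : R :=
  let L := ln nu in
  81 + 234 * nu ^+ 2 + 9 * nu ^+ 4 + 216 * L - 72 * nu ^+ 2 * L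
  + 144 * L ^+ 2 - 72 * L ^+ 3 + 24 * nu ^+ 2 * L ^+ 3 - 96 * L ^+ 4
  + 16 * L ^+ 6
  + (216 * L ^+ 3 - 72 * nu ^+ 2 * L ^+ 3 + 288 * L ^+ 4 - 96 * L ^+ 6) * s
  + 144 * L ^+ 6 * s ^+ 2.

Definition E3 (s nu : R) : R := (1/12) * (e1 s nu - Num.sqrt (e2 s nu)).

Definition f_aux (nu : R) : R :=
  let L := ln nu in
  (6 * (-1 + nu ^+ 2) + 4 * (-3 + L ^+ 2) * L) * L ^+ 3.

Definition g_aux (nu : R) : R :=
  let L := ln nu in
  96 * L ^+ 6 * (3 * (1 - nu ^+ 2) + 3 * (1 + nu ^+ 2) * L
                 - (1 + nu ^+ 2) * L ^+ 3)
  + (6 * (-1 + nu ^+ 2) * L ^+ 3 + 4 * (L ^+ 2 - 3) * L ^+ 4) ^+ 2.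

Definition sigma2 (nu : R) : R :=
  (1 / (16 * ln nu ^+ 6)) * (f_aux nu + Num.sqrt (g_aux nu)).

End Defs.

(* Mhat is symmetric and persymmetric, so (1, 0, -1) is an eigenvector with
   eigenvalue p - k >= 0 (p, q the diagonal, k the corner entries), and the
   other two eigenvalues are those of a 2x2 block with trace a + b and
   determinant a b - 2 nu^2, where a = p + k and b = q: they are
   (a + b +- r) / 2 with r^2 = (a - b)^2 + 8 nu^2, and E3 is the smaller one.
   The larger one is >= 0, and the smaller one is >= 0 iff a b >= 2 nu^2.
   The identity g - (16 L^6 s - f)^2 = 288 L^6 (a b - 2 nu^2), L = ln nu,
   turns this into s <= sigma2 nu once f <= sqrt g, i.e. once
   3 (1 - nu^2) + 3 (1 + nu^2) L - (1 + nu^2) L^3 >= 0; with nu = e^u this is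
   nu * phi u >= 0, and phi, then phi' / u, vanish at 0 and are nonincreasing
   on ]-oo, 0]. *)

From HB Require Import structures.
From mathcomp Require Import all_boot all_order all_algebra.
From mathcomp Require Import all_classical all_reals.
From mathcomp Require Import exp.
From mathcomp Require Import topology normedtype sequences derive realfun.
From mathcomp Require Import ring lra.
Import Order.TTheory GRing.Theory Num.Theory numFieldNormedType.Exports.
Set Implicit Arguments. Unset Strict Implicit. Unset Printing Implicit Defensive.
Local Open Scope ring_scope.

Lemma det_mx33 (R : comNzRingType) (a : nat -> nat -> R) :
  \det (\matrix_(i < 3, j < 3) a i j)
  = a 0 0 * (a 1 1 * a 2 2 - a 1 2 * a 2 1) - a 0 1 * (a 1 0 * a 2 2 - a 1 2 * a 2 0)
    + a 0 2 * (a 1 0 * a 2 1 - a 1 1 * a 2 0).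
Proof.
rewrite (expand_det_row _ 0) !big_ord_recr big_ord0 /= /cofactor.
rewrite !(expand_det_row _ 0) !big_ord_recr !big_ord0 /= /cofactor.
rewrite !(expand_det_row _ 0) !big_ord_recr !big_ord0 /= /cofactor !det_mx00 !mxE /=.
rewrite /bump /=; ring.
Qed.

Definition persym3 {R : nzRingType} (p q k n : R) : 'M[R]_3 :=
  \matrix_(i < 3, j < 3)
    nth 0 (nth [::] [:: [:: p; -n; k]; [:: -n; q; -n]; [:: k; -n; p]] i) j.

Lemma char_poly_persym3 (R : comNzRingType) (p q k n : R) :
  char_poly (persym3 p q k n)
  = ('X - (p - k)%:P) * ('X^2 - (p + k + q)%:P * 'X + ((p + k) * q - 2 * n ^+ 2)%:P).
Proof.
rewrite /char_poly /char_poly_mx /persym3.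
set rows := [:: [:: p; -n; k]; [:: -n; q; -n]; [:: k; -n; p]].
rewrite [X in \det X](_ : _ = \matrix_(i < 3, j < 3)
   ('X *+ (i == j :> nat) - (nth 0 (nth [::] rows i) j)%:P)); last first.
  by apply/matrixP => i j; rewrite !mxE.
rewrite (@det_mx33 _ (fun i j => 'X *+ (i == j) - (nth 0 (nth [::] rows i) j)%:P)).
rewrite /= !mulr1n !mulr0n !(polyCD, polyCN, polyCM, polyCB); ring.
Qed.

Lemma quadratic_factor (R : numFieldType) (a b c r : R) :
  r ^+ 2 = (a - b) ^+ 2 + 4 * c ->
  'X^2 - (a + b)%:P * 'X + (a * b - c)%:P
  = ('X - ((a + b + r) / 2)%:P) * ('X - ((a + b - r) / 2)%:P).
Proof.
move=> r2; set u := (a + b + r) / 2; set v := (a + b - r) / 2.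
have -> : a + b = u + v by rewrite /u /v; field.
have -> : a * b - c = u * v.
  have -> : u * v = ((a + b) ^+ 2 - r ^+ 2) / 4 by rewrite /u /v; field.
  by rewrite r2; field.
by clearbody u v; rewrite polyCD polyCM; ring.
Qed.

Lemma larger_root_ge0 (R : realFieldType) (a b c r : R) :
  0 <= a -> 0 <= c -> 0 <= r -> r ^+ 2 = (a - b) ^+ 2 + 4 * c -> 0 <= a + b + r.
Proof.
move=> a_ge0 c_ge0 r_ge0 r2.
suff : a - b <= r by lra.
have [ab_lt0 | ab_ge0] := ltrP (a - b) 0; first lra.
by rewrite -(ler_pXn2r (_ : 0 < 2)%N) ?nnegrE //; lra.
Qed.

Lemma smaller_root_ge0 (R : realFieldType) (a b c r : R) :
  0 < a -> 0 <= c -> 0 <= r -> r ^+ 2 = (a - b) ^+ 2 + 4 * c ->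
  (0 <= a + b - r) <-> (c <= a * b).
Proof.
move=> a_gt0 c_ge0 r_ge0 r2.
have r2E : r ^+ 2 = (a + b) ^+ 2 - 4 * (a * b - c) by rewrite r2; ring.
split => [r_le | c_le].
- have : r ^+ 2 <= (a + b) ^+ 2 by rewrite ler_pXn2r ?nnegrE //; lra.
  lra.
- have b_ge0 : 0 <= b by nra.
  suff : r <= a + b by lra.
  by rewrite -(ler_pXn2r (_ : 0 < 2)%N) ?nnegrE //; lra.
Qed.

Section Analysis.
Context {R : realType}.

Lemma ge0_nonpos_of_derive_le0 (f df : R -> R) :
  (forall x : R, is_derive x 1 f (df x)) -> (forall x, x <= 0 -> df x <= 0) ->
  f 0 = 0 -> forall u, u <= 0 -> 0 <= f u.
Proof.
move=> f_df df_le0 f0 u u_le0; rewrite -f0.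
have f_cont : continuous f.
  by move=> x; apply/differentiable_continuous/derivable1_diffP; have [] := f_df x.
apply: (@ler0_derive1_nincrNy _ f 0) => // [x|].
- by rewrite in_itv /= => x_lt0; rewrite derive1E derive_val df_le0 // ltW.
- exact: continuous_subspaceT.
Qed.

Definition psi (u : R) :=
  3 * (expR u - expR (- u)) - 3 * u * (expR u + expR (- u))
  - u ^+ 2 * (expR u - expR (- u)).

Definition phi (u : R) :=
  - 3 * (expR u - expR (- u)) + 3 * u * (expR u + expR (- u))
  - u ^+ 3 * (expR u + expR (- u)).

Lemma is_derive_psi (u : R) : is_derive u 1 psi
  (- 5 * u * (expR u - expR (- u)) - u ^+ 2 * (expR u + expR (- u))).
Proof.
rewrite /psi; apply: is_derive_eq.
by rewrite /GRing.scale /=; set e := expR u; set f := expR (- u); ring.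
Qed.

Lemma is_derive_phi (u : R) : is_derive u 1 phi (u * psi u).
Proof.
rewrite /phi /psi; apply: is_derive_eq.
by rewrite /GRing.scale /=; set e := expR u; set f := expR (- u); ring.
Qed.

Lemma psi_ge0 (u : R) : u <= 0 -> 0 <= psi u.
Proof.
apply: (ge0_nonpos_of_derive_le0 is_derive_psi); last first.
  by rewrite /psi oppr0 subrr !mulr0 mul0r !subr0.
move=> x x_le0.
have sh_ge0 : 0 <= x * (expR x - expR (- x)).
  by apply: mulr_le0 => //; rewrite subr_le0 ler_expR; lra.
have ch_ge0 : 0 <= x ^+ 2 * (expR x + expR (- x)).
  by rewrite mulr_ge0 ?sqr_ge0 // addr_ge0 // ltW // expR_gt0.
rewrite -mulrA; lra.
Qed.

Lemma phi_ge0 (u : R) : u <= 0 -> 0 <= phi u.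
Proof.
apply: (ge0_nonpos_of_derive_le0 is_derive_phi); last first.
  by rewrite /phi oppr0 subrr !mulr0 mul0r expr0n /= mul0r !subr0 addr0.
by move=> x x_le0; rewrite mulr_le0_ge0 // psi_ge0.
Qed.

Lemma ln_cubic_ge0 (nu : R) : 0 < nu < 1 ->
  0 <= 3 * (1 - nu ^+ 2) + 3 * (1 + nu ^+ 2) * ln nu - (1 + nu ^+ 2) * ln nu ^+ 3.
Proof.
move=> /andP[nu_gt0 nu_lt1].
have ln_le0 : ln nu <= 0 by rewrite ltW // ln_lt0 // nu_gt0.
have := phi_ge0 ln_le0; rewrite /phi expRN lnK ?posrE // => phi_ge0.
have -> : 3 * (1 - nu ^+ 2) + 3 * (1 + nu ^+ 2) * ln nu - (1 + nu ^+ 2) * ln nu ^+ 3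
   = nu * (- 3 * (nu - nu^-1) + 3 * ln nu * (nu + nu^-1) - ln nu ^+ 3 * (nu + nu^-1)).
  by field; rewrite gt_eqF.
exact: mulr_ge0 (ltW nu_gt0) phi_ge0.
Qed.

End Analysis.

Section Mhat.
Context {R : realType}.
Implicit Types s nu : R.

Definition mhat_p s nu : R := -(2/3) * s * ln nu ^+ 3 + 1/2.
Definition mhat_q s nu : R := -(2/3) * (1 - 2 * s) * ln nu ^+ 3 + 2 * (1 + ln nu).
Definition mhat_k nu : R := (1/2) * nu ^+ 2.

Lemma Mhat_persym3 s nu :
  Mhat s nu = persym3 (mhat_p s nu) (mhat_q s nu) (mhat_k nu) nu.
Proof. by []. Qed.

Lemma e1_mhatE s nu : e1 s nu = 6 * (mhat_p s nu + mhat_k nu + mhat_q s nu).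
Proof. by rewrite /e1 /mhat_p /mhat_k /mhat_q; field. Qed.

Lemma e2_mhatE s nu : e2 s nu =
  6 ^+ 2 * ((mhat_p s nu + mhat_k nu - mhat_q s nu) ^+ 2 + 4 * (2 * nu ^+ 2)).
Proof. by rewrite /e2 /mhat_p /mhat_k /mhat_q; field. Qed.

Lemma g_aux_sub_sqr s nu :
  g_aux nu - (16 * ln nu ^+ 6 * s - f_aux nu) ^+ 2
  = 288 * ln nu ^+ 6 * ((mhat_p s nu + mhat_k nu) * mhat_q s nu - 2 * nu ^+ 2).
Proof. by rewrite /g_aux /f_aux /mhat_p /mhat_k /mhat_q; field. Qed.

Lemma f_aux_sqr_le_g_aux nu : 0 < nu < 1 -> f_aux nu ^+ 2 <= g_aux nu.
Proof.
move=> nu01; rewrite -subr_ge0.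
have -> : g_aux nu - f_aux nu ^+ 2 = 96 * ln nu ^+ 6 *
    (3 * (1 - nu ^+ 2) + 3 * (1 + nu ^+ 2) * ln nu - (1 + nu ^+ 2) * ln nu ^+ 3).
  by rewrite /g_aux /f_aux; ring.
by rewrite mulr_ge0 ?ln_cubic_ge0 // mulr_ge0 // exprn_even_ge0.
Qed.

Lemma le_sigma2 s nu : 0 < s -> 0 < nu < 1 ->
  (s <= sigma2 nu) <-> (2 * nu ^+ 2 <= (mhat_p s nu + mhat_k nu) * mhat_q s nu).
Proof.
move=> s_gt0 nu01; have /andP[nu_gt0 nu_lt1] := nu01.
have ln_neq0 : ln nu != 0 by rewrite lt_eqF // ln_lt0 // nu_gt0.
have L6_gt0 : 0 < ln nu ^+ 6 by rewrite exprn_even_gt0 // ln_neq0 orbT.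
have F2_le := f_aux_sqr_le_g_aux nu01.
have G_ge0 : 0 <= g_aux nu := le_trans (sqr_ge0 _) F2_le.
have F_le : f_aux nu <= Num.sqrt (g_aux nu).
  by apply: le_trans (ler_norm _) _; rewrite -sqrtr_sqr ler_sqrt.
have c_gt0 : 0 < 16 * ln nu ^+ 6 by rewrite mulr_gt0.
rewrite /sigma2 mul1r (ler_pdivlMl _ _ c_gt0).
have -> : (2 * nu ^+ 2 <= (mhat_p s nu + mhat_k nu) * mhat_q s nu)
    = (`|16 * ln nu ^+ 6 * s - f_aux nu| <= Num.sqrt (g_aux nu)).
  rewrite -sqrtr_sqr ler_sqrt // -subr_ge0 -[_ <= g_aux nu]subr_ge0 g_aux_sub_sqr.
  by rewrite pmulr_rge0 // mulr_gt0.
rewrite ler_norml.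
have cs_gt0 : 0 < 16 * ln nu ^+ 6 * s by rewrite mulr_gt0.
split => [|/andP[] //]; lra.
Qed.

End Mhat.

Theorem lemma4p12 (R : realType) (s nu : R) :
  1/4 <= s <= 1/2 -> 0 < nu < 1 ->
  exists l1 l2 : R,
    [/\ 0 <= l1, 0 <= l2,
        char_poly (Mhat s nu)
          = ('X - l1%:P) * ('X - l2%:P) * ('X - (E3 s nu)%:P)
      & (0 <= E3 s nu <-> s <= sigma2 nu)].
Proof.
move=> /andP[s_ge s_le] nu01; have /andP[nu_gt0 nu_lt1] := nu01.
have L3_lt0 : ln nu ^+ 3 < 0 by rewrite exprn_odd_lt0 // ln_lt0 // nu_gt0.
have p_ge : 1/2 <= mhat_p s nu by rewrite /mhat_p; nra.
have k_bounds : 0 < mhat_k nu < 1/2 by rewrite /mhat_k; apply/andP; split; nra.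
set a := mhat_p s nu + mhat_k nu; set b := mhat_q s nu; set c := 2 * nu ^+ 2.
have a_gt0 : 0 < a by rewrite /a; lra.
have c_ge0 : 0 <= c by rewrite /c mulr_ge0 ?sqr_ge0.
pose r := Num.sqrt (e2 s nu) / 6.
have r_ge0 : 0 <= r by rewrite divr_ge0 ?sqrtr_ge0.
have r2 : r ^+ 2 = (a - b) ^+ 2 + 4 * c.
  rewrite expr_div_n sqr_sqrtr ?e2_mhatE; first by rewrite /a /b /c; field.
  by rewrite mulr_ge0 ?sqr_ge0 // addr_ge0 ?sqr_ge0 // mulr_ge0.
have E3E : E3 s nu = (a + b - r) / 2 by rewrite /E3 e1_mhatE /r /a /b; field.
exists (mhat_p s nu - mhat_k nu), ((a + b + r) / 2); split.
- lra.
- by rewrite divr_ge0 // (larger_root_ge0 (ltW a_gt0) c_ge0 r_ge0 r2).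
- by rewrite Mhat_persym3 char_poly_persym3 (quadratic_factor r2) E3E mulrA.
- rewrite E3E le_sigma2 //; last lra.
  by rewrite -(smaller_root_ge0 a_gt0 c_ge0 r_ge0 r2) pmulr_lge0 // invr_gt0.
Qed.
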